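(* Let $V$ be an infinite-dimensional vector space over a field $\mathbb{F}$ and $u\in\mathrm{End}(V)$. Assume that $u$ has a dominant eigenvalue $\lambda$ and that $u-\lambda\,\mathrm{id}_V$ has infinite rank. Then there exists a decomposition $V=V_1\oplus V_2$ into linear subspaces stable under $u$ such that: (i) $V_1$ is infinite-dimensional; (ii) the endomorphism $u_{|V_1}$ of $V_1$ has no dominant eigenvalue; (iii) $u(x)=\lambda x$ for all $x\in V_2$.
   Context: For an endomorphism $f$ of an infinite-dimensional vector space $E$, a scalar $\mu$ is a dominant eigenvalue of $f$ if $\operatorname{rk}(f-\mu\,\mathrm{id}_E)<\dim E$. *)

From HB Require Import structures.
From mathcomp Require Import all_boot all_order all_algebra.
From mathcomp Require Import boolp classical_sets functions cardinality.
Set Implicit Arguments. Unset Strict Implicit. Unset Printing Implicit Defensive.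
Import GRing.Theory.
Local Open Scope ring_scope.
Local Open Scope classical_set_scope.

Definition subspace (F : fieldType) (V : lmodType F) (W : set V) : Prop :=
  W 0 /\ (forall x y, W x -> W y -> W (x + y)) /\
  (forall (a : F) x, W x -> W (a *: x)).

Definition span (F : fieldType) (V : lmodType F) (S : set V) : set V :=
  [set v | exists (s : seq V) (c : V -> F),
      (forall x, x \in s -> S x) /\ v = \sum_(x <- s) c x *: x].

Definition lin_indep (F : fieldType) (V : lmodType F) (S : set V) : Prop :=
  forall (s : seq V) (c : V -> F), uniq s -> (forall x, x \in s -> S x) ->
    \sum_(x <- s) c x *: x = 0 -> forall x, x \in s -> c x = 0.

Definition is_basis (F : fieldType) (V : lmodType F) (W B : set V) : Prop :=
  B `<=` W /\ lin_indep B /\ span B = W.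

(* dim W1 < dim W2 (as cardinals), measured through bases
   (basis cardinality is independent of the chosen basis). *)
Definition dim_lt (F : fieldType) (V : lmodType F) (W1 W2 : set V) : Prop :=
  exists B1 B2, is_basis W1 B1 /\ is_basis W2 B2 /\
    (card_le B1 B2 /\ ~ card_le B2 B1).

Definition infinite_dim (F : fieldType) (V : lmodType F) (W : set V) : Prop :=
  exists B, is_basis W B /\ infinite_set B.

Definition shifted_image (F : fieldType) (V : lmodType F)
    (f : V -> V) (mu : F) (W : set V) : set V :=
  [set f x - mu *: x | x in W].

(* mu is a dominant eigenvalue of the endomorphism f restricted to the
   (f-stable) subspace W:  rk((f - mu id)|_W) < dim W. *)
Definition dominant_eigenvalue_on (F : fieldType) (V : lmodType F)
    (f : V -> V) (W : set V) (mu : F) : Prop :=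
  dim_lt (shifted_image f mu W) W.

From Pilot Require Import Defs.
From HB Require Import structures.
From mathcomp Require Import all_boot all_order all_algebra.
From mathcomp Require Import boolp classical_sets functions cardinality.
From Stdlib Require Cantor.
Import GRing.Theory.
Local Open Scope ring_scope.
Local Open Scope classical_set_scope.
Local Open Scope card_scope.

(* Let f = u - lambda, B a basis of Im f, c b a preimage of each b in B and
   E = ker f.  Then V = span (c B) + E, so dim V > |B| forces E to contain an
   independent set Z with |Z| = |B|.  The span V1 of B, c B and Z contains
   Im f, hence is u-stable, and has dimension |B|; for every mu the image of
   (u - mu) on V1 contains B (if mu = lambda) or Z (if mu <> lambda), so it
   has dimension |B| as well and mu is not dominant.  Since V = V1 + E, any
   complement V2 of V1 inside E completes the decomposition. *)

Set Implicit Arguments. Unset Strict Implicit.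

Lemma image_cover_card_le {T U} (A : set T) (B : set U) (g : U -> T) :
  A `<=` g @` B -> A #<= B.
Proof. by move=> AgB; exact: card_le_trans (subset_card_le AgB) (card_image_le g B). Qed.

Lemma card_le_cover {T U} (x0 : T) (A : set T) (B : set U) :
  A #<= B -> exists g : U -> T, A `<=` g @` B.
Proof.
move=> /ocard_geP[h]; exists (fun b => odflt x0 (h b)) => a Aa.
have [b Bb hb] : exists2 b, B b & h b = Some a by apply: 'surj_h; exists a.
by exists b => //; rewrite hb.
Qed.

Lemma card_le_subset_eq {T U} (A : set T) (B : set U) :
  A #<= B -> exists2 Z, Z `<=` B & Z #= A.
Proof.
move=> /card_leP[f]; exists ((val \o f) @` [set: A]).
  by move=> _ [a _ <-]; exact: set_valP.
apply: card_eq_trans (card_setT A); apply: inj_card_eq => a b _ _ /val_inj.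
by move=> fab; apply: (@inj _ _ _ f) fab; rewrite in_setE.
Qed.

Lemma chain_common_member T (Fm : set (set T)) p q :
  total_on Fm subset -> (\bigcup_(X in Fm) X) p -> (\bigcup_(X in Fm) X) q ->
  exists2 X, Fm X & X p /\ X q.
Proof.
move=> tot [X FX Xp] [Y FY Yq].
have [XY|YX] := tot X Y FX FY; first by exists Y => //; split => //; exact: XY.
by exists X => //; split => //; exact: YX.
Qed.

Lemma chain_bigcup_seq (T : eqType) (J : set T) (Fm : set (set T)) (s : seq T) :
  total_on Fm subset -> Fm !=set0 ->
  (forall x, x \in s -> (J `|` \bigcup_(X in Fm) X) x) ->
  exists2 X, Fm X & forall x, x \in s -> (J `|` X) x.
Proof.
move=> tot [X0 FX0]; elim: s => [|y s IH] sJF; first by exists X0.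
have [X FX Xs] : exists2 X, Fm X & forall x, x \in s -> (J `|` X) x.
  by apply: IH => x xs; apply: sJF; rewrite inE xs orbT.
have [Jy|[Y FY Yy]] := sJF y (mem_head _ _).
  by exists X => // x; rewrite inE => /orP[/eqP->|/Xs]; [left|].
have [XY|YX] := tot X Y FX FY.
  exists Y => // x; rewrite inE => /orP[/eqP->|/Xs[Jx|/XY]]; by [right|left|right].
by exists X => // x; rewrite inE => /orP[/eqP->|/Xs]; [right; exact: YX|].
Qed.

Lemma infinite_set_seq T (A : set T) :
  infinite_set A -> exists phi : nat -> T, injective phi /\ forall n, A (phi n).
Proof.
elim/Ppointed: T => T in A *; first by rewrite emptyE => /(_ (finite_set0 _)).
move=> /infiniteP /pcard_leP[phi]; exists phi; split; last by move=> n; apply: funS.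
by move=> n m e; apply: (@inj _ _ _ phi) e; rewrite in_setE.
Qed.

Section PartialBijection.
Variables (T U : Type) (A : set T) (B : set U).

Definition partial_bij (R : set (T * U)) :=
  [/\ R `<=` A `*` B, forall a b b', R (a, b) -> R (a, b') -> b = b' &
      forall a a' b, R (a, b) -> R (a', b) -> a = a'].

Lemma partial_bij_card_eq R : partial_bij R -> fst @` R #= snd @` R.
Proof.
case=> _ Rfun Rinj; apply: card_eq_trans (card_esym _).
  by apply: inj_card_eq => -[a b] [a' b'] /set_mem Rab /set_mem Rab' /= e;
    rewrite -e in Rab' *; rewrite (Rfun _ _ _ Rab Rab').
by apply: inj_card_eq => -[a b] [a' b'] /set_mem Rab /set_mem Rab' /= e;
  rewrite -e in Rab' *; rewrite (Rinj _ _ _ Rab Rab').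
Qed.

Lemma partial_bij_bigcup (Fm : set (set (T * U))) :
  Fm `<=` partial_bij -> total_on Fm subset ->
  partial_bij (\bigcup_(R in Fm) R).
Proof.
move=> Fbij tot; split.
- by move=> p [R FR Rp]; case: (Fbij R FR) => RAB _ _; exact: RAB.
- move=> a b b' p q; have [R FR [Rp Rq]] := chain_common_member tot p q.
  by case: (Fbij R FR) => _ Rfun _; exact: Rfun Rp Rq.
- move=> a a' b p q; have [R FR [Rp Rq]] := chain_common_member tot p q.
  by case: (Fbij R FR) => _ _ Rinj; exact: Rinj Rp Rq.
Qed.

Lemma partial_bij_setU1 R a b : partial_bij R -> A a -> B b ->
  ~ (fst @` R) a -> ~ (snd @` R) b -> partial_bij (R `|` [set (a, b)]).
Proof.
move=> [RAB Rfun Rinj] Aa Bb na nb; split.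
- by move=> p [/RAB //|->].
- move=> a1 b1 b2 [p|[e1 e2]] [q|[e3 e4]]; subst => //.
  + exact: Rfun p q.
  + by case: na; eexists; first exact: p.
  + by case: na; eexists; first exact: q.
- move=> a1 a2 b1 [p|[e1 e2]] [q|[e3 e4]]; subst => //.
  + exact: Rinj p q.
  + by case: nb; eexists; first exact: p.
  + by case: nb; eexists; first exact: q.
Qed.

End PartialBijection.

Lemma card_le_total T U (A : set T) (B : set U) : A #<= B \/ B #<= A.
Proof.
have [R [Rbij Rmax]] := Zorn_bigcup (@partial_bij_bigcup _ _ A B).
have [RAB _ _] := Rbij.
have fstA : fst @` R `<=` A by move=> _ [p /RAB[] ? _ <-].
have sndB : snd @` R `<=` B by move=> _ [p /RAB[] _ ? <-].
have [domA|/nonsubset[a [Aa na]]] := pselect (A `<=` fst @` R).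
  left; have -> : A = fst @` R by apply/seteqP.
  by rewrite (card_le_eql (partial_bij_card_eq Rbij)); exact: subset_card_le.
have [ranB|/nonsubset[b [Bb nb]]] := pselect (B `<=` snd @` R).
  right; have -> : B = snd @` R by apply/seteqP.
  by rewrite -(card_le_eql (partial_bij_card_eq Rbij)); exact: subset_card_le.
exfalso; apply: (Rmax _ _ (partial_bij_setU1 Rbij Aa Bb na nb)).
split; first by move=> p Rp; left.
by move=> /(_ (a, b) (or_intror erefl)) Rab; apply: na; exists (a, b).
Qed.

Section DisjointSequences.
Variables (T : choiceType) (P : set T).

Definition disjoint_seqs (Phi : set (nat -> T)) :=
  [/\ forall phi, Phi phi -> injective phi,
      forall phi n, Phi phi -> P (phi n) &
      forall phi psi n m, Phi phi -> Phi psi -> phi n = psi m -> phi = psi].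

Local Notation cover Phi := (\bigcup_(phi in Phi) range phi).

Lemma disjoint_seqs_bigcup (Fm : set (set (nat -> T))) :
  Fm `<=` disjoint_seqs -> total_on Fm subset ->
  disjoint_seqs (\bigcup_(Phi in Fm) Phi).
Proof.
move=> Fdis tot; split.
- by move=> phi [Phi FPhi Phiphi]; case: (Fdis Phi FPhi) => inj _ _; exact: inj.
- by move=> phi n [Phi FPhi Phiphi]; case: (Fdis Phi FPhi) => _ PPhi _; exact: PPhi.
- move=> phi psi n m p q; have [Phi FPhi [Pp Pq]] := chain_common_member tot p q.
  by case: (Fdis Phi FPhi) => _ _ dis; exact: dis.
Qed.

Lemma disjoint_seqs_setU1 Phi psi : disjoint_seqs Phi -> injective psi ->
  (forall n, (P `\` cover Phi) (psi n)) -> disjoint_seqs (Phi `|` [set psi]).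
Proof.
move=> [inj PPhi dis] psi_inj psiP; split.
- by move=> phi [/inj|->].
- by move=> phi n [/PPhi|->] //; case: (psiP n).
- move=> phi chi n m [Phiphi|->] [Phichi|->] // e.
  + exact: dis e.
  + by case: (psiP m) => _ []; exists phi => //; exists n.
  + by case: (psiP n) => _ []; exists chi => //; exists m.
Qed.

Lemma disjoint_seqs_cofinite : exists Phi,
  disjoint_seqs Phi /\ finite_set (P `\` cover Phi).
Proof.
have [Phi [Phidis Phimax]] := Zorn_bigcup disjoint_seqs_bigcup.
exists Phi; split => //; apply: contrapT => /infinite_set_seq[psi [psi_inj psiL]].
apply: (Phimax _ _ (disjoint_seqs_setU1 Phidis psi_inj psiL)).
split; first by move=> phi Phiphi; left.
move=> /(_ psi (or_intror erefl)) Phipsi.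
by case: (psiL 0%N) => _ []; exists psi => //; exists 0%N.
Qed.

End DisjointSequences.

(* Up to a finite remainder l, P is a disjoint union of injective sequences;
   with Cantor's pairing <a, b>, the surjection g below sends phi (2 <a, b>)
   to (phi a, b) and phi0 (2 <a, b> + 1) to (l_a, b). *)
Lemma card_setX_nat_le (T : choiceType) (P : set T) :
  infinite_set P -> P `*` [set: nat] #<= P.
Proof.
move=> Pinf; have [Phi [[Phi_inj PPhi dis] Lfin]] := disjoint_seqs_cofinite P.
have [l Ll] := (finite_seqP _).1 Lfin.
have [Phi0|/set0P[phi0 Phiphi0]] := eqVneq Phi set0.
  by move: Lfin; rewrite Phi0 bigcup_set0 setD0.
have /choice[dec decP] : forall x, exists d : (nat -> T) * nat,
    (exists2 phi, Phi phi & range phi x) -> Phi d.1 /\ d.1 d.2 = x.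
  move=> x; have [[phi Phiphi [k _ <-]]|nx] := pselect (exists2 phi, Phi phi & range phi x).
    by exists (phi, k).
  by exists (phi0, 0%N) => /nx.
have decE phi k : Phi phi -> dec (phi k) = (phi, k).
  move=> Phiphi; have /decP : exists2 psi, Phi psi & range psi (phi k).
    by exists phi => //; exact: imageT.
  case: (dec (phi k)) => psi j /= [Phipsi e].
  have epsi := dis _ _ _ _ Phipsi Phiphi e; subst psi.
  by rewrite (Phi_inj _ Phiphi _ _ e).
pose g x := let: (phi, k) := dec x in let: (a, b) := Cantor.of_nat k./2 in
  if odd k then (nth x l a, b) else (phi a, b).
apply: (@image_cover_card_le _ _ _ _ g) => -[y m] [/= Py _].
have [[phi Phiphi [n _ <-]]|ncov] := pselect (exists2 phi, Phi phi & range phi y).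
  have [c cE] : exists c, Cantor.of_nat c = (n, m).
    by exists (Cantor.to_nat (n, m)); exact: Cantor.cancel_of_to.
  exists (phi c.*2); first exact: PPhi.
  by rewrite /g decE // odd_double doubleK cE.
have [c cE] : exists c, Cantor.of_nat c = (index y l, m).
  by exists (Cantor.to_nat (index y l, m)); exact: Cantor.cancel_of_to.
have ly : y \in l by have : [set` l] y by rewrite -Ll.
exists (phi0 c.*2.+1); first exact: PPhi.
by rewrite /g decE //= odd_double uphalf_double cE nth_index.
Qed.

Lemma card_bigcup_seq_le (I : choiceType) (T : eqType) (P : set I) (s : I -> seq T) :
  infinite_set P -> \bigcup_(i in P) [set` s i] #<= P.
Proof.
move=> Pinf; apply: card_le_trans (card_setX_nat_le Pinf).
have [->|/set0P[x0 _]] := eqVneq (\bigcup_(i in P) [set` s i]) set0.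
  exact: card_ge0.
apply: (@image_cover_card_le _ _ _ _ (fun p => nth x0 (s p.1) p.2)).
by move=> x [i Pi xi]; exists (i, index x (s i)) => //=; rewrite nth_index.
Qed.

Lemma card_setU_le T (U : choiceType) (A B : set T) (D : set U) :
  A #<= D -> B #<= D -> infinite_set D -> A `|` B #<= D.
Proof.
elim/Ppointed: T => T in A B *; first by rewrite !emptyE.
move=> /(card_le_cover point)[gA AgD] /(card_le_cover point)[gB BgD] Dinf.
apply: card_le_trans (card_setX_nat_le Dinf).
apply: (@image_cover_card_le _ _ _ _ (fun p => if p.2 == 0%N then gA p.1 else gB p.1)).
by move=> x [/AgD[d Dd <-]|/BgD[d Dd <-]]; [exists (d, 0%N)|exists (d, 1%N)].
Qed.

Section Span.
Variables (F : fieldType) (V : lmodType F).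
Implicit Types (S A B M : set V).

(* [span] with a coefficient attached to each occurrence, so that sums of
   combinations are concatenations; [spanE] identifies the two. *)
Definition spanp S : set V :=
  [set v | exists t : seq (F * V),
     (forall p, p \in t -> S p.2) /\ v = \sum_(p <- t) p.1 *: p.2].

Lemma sum_undup_support (t : seq (F * V)) :
  \sum_(x <- undup (map snd t)) (\sum_(p <- t | p.2 == x) p.1) *: x =
  \sum_(p <- t) p.1 *: p.2.
Proof.
under eq_bigr => x _ do rewrite scaler_suml big_mkcond.
rewrite exchange_big /= big_seq [RHS]big_seq; apply: eq_bigr => p pt.
have pin : p.2 \in undup (map snd t) by rewrite mem_undup; apply: map_f.
rewrite (bigD1_seq _ pin (undup_uniq _)) /= eqxx big1 ?addr0 // => x.
by rewrite eq_sym => /negbTE->.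
Qed.

Lemma spanp_uniq S v : spanp S v -> exists s (c : V -> F),
  [/\ uniq s, forall x, x \in s -> S x & v = \sum_(x <- s) c x *: x].
Proof.
case=> t [tS ->]; exists (undup (map snd t)), (fun x => \sum_(p <- t | p.2 == x) p.1).
split; [exact: undup_uniq| |by rewrite sum_undup_support].
by move=> x; rewrite mem_undup => /mapP[p pt ->]; exact: tS.
Qed.

Lemma spanE S : Defs.span S = spanp S.
Proof.
apply/seteqP; split=> v.
  case=> s [c [sS ->]]; exists (map (fun x => (c x, x)) s); split.
    by move=> p /mapP[x xs ->]; exact: sS.
  by rewrite big_map.
by move=> /spanp_uniq[s [c [_ sS ->]]]; exists s, c.
Qed.

Lemma spanp0 S : spanp S 0.
Proof. by exists [::]; rewrite big_nil. Qed.

Lemma spanpD S x y : spanp S x -> spanp S y -> spanp S (x + y).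
Proof.
case=> t1 [t1S ->] [t2 [t2S ->]]; exists (t1 ++ t2); rewrite big_cat; split => //.
by move=> p; rewrite mem_cat => /orP[/t1S|/t2S].
Qed.

Lemma spanpZ S (a : F) x : spanp S x -> spanp S (a *: x).
Proof.
case=> t [tS ->]; exists (map (fun p => (a * p.1, p.2)) t); split.
  by move=> p /mapP[q qt ->] /=; exact: tS.
by rewrite big_map scaler_sumr; apply: eq_bigr => p _; rewrite scalerA.
Qed.

Lemma sub_spanp S : S `<=` spanp S.
Proof.
move=> x Sx; exists [:: (1, x)]; rewrite big_seq1 scale1r; split => //.
by move=> p; rewrite inE => /eqP->.
Qed.

Lemma spanp_sum S (I : eqType) (r : seq I) (G : I -> V) :
  (forall i, i \in r -> spanp S (G i)) -> spanp S (\sum_(i <- r) G i).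
Proof.
elim: r => [|i r IH] rS; first by rewrite big_nil; exact: spanp0.
rewrite big_cons; apply: spanpD; first by apply: rS; rewrite inE eqxx.
by apply: IH => j jr; apply: rS; rewrite inE jr orbT.
Qed.

Lemma spanp_subspace S : subspace (spanp S).
Proof. by split; [exact: spanp0|split=> [x y|a x]; [exact: spanpD|exact: spanpZ]]. Qed.

Lemma spanp_sub_subspace S W : subspace W -> S `<=` W -> spanp S `<=` W.
Proof.
case=> W0 [WD WZ] SW v [t [tS ->]].
elim: t tS => [|p t IH] tS; first by rewrite big_nil.
rewrite big_cons; apply: WD; first by apply/WZ/SW/tS; rewrite inE eqxx.
by apply: IH => q qt; apply: tS; rewrite inE qt orbT.
Qed.

Lemma spanp_closed S S' : S `<=` spanp S' -> spanp S `<=` spanp S'.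
Proof. exact: spanp_sub_subspace (spanp_subspace S'). Qed.

Lemma spanpS S S' : S `<=` S' -> spanp S `<=` spanp S'.
Proof. by move=> SS'; apply: spanp_closed => x /SS'; exact: sub_spanp. Qed.

Lemma spanpU A B v :
  spanp (A `|` B) v -> exists a b, [/\ spanp A a, spanp B b & v = a + b].
Proof.
case=> t [tAB ->]; pose inA (p : F * V) := `[< A p.2 >].
exists (\sum_(p <- t | inA p) p.1 *: p.2), (\sum_(p <- t | ~~ inA p) p.1 *: p.2).
split; last by rewrite [LHS](bigID inA).
- exists [seq p <- t | inA p]; rewrite big_filter; split => // p.
  by rewrite mem_filter => /andP[/asboolP].
- exists [seq p <- t | ~~ inA p]; rewrite big_filter; split => // p.
  by rewrite mem_filter => /andP[/asboolPn nA /tAB[]].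
Qed.

Lemma lin_indep0 : lin_indep (@set0 V).
Proof. by move=> s c _ s0 _ x /s0. Qed.

Lemma lin_indepS A B : A `<=` B -> lin_indep B -> lin_indep A.
Proof. by move=> AB iB s c us sA; apply: iB => // x /sA /AB. Qed.

Lemma lin_indep_neq0 A : lin_indep A -> ~ A 0.
Proof.
move=> iA A0; have /eqP : (1 : F) = 0.
  apply: (iA [:: 0] (fun=> 1) erefl _ _ 0 (mem_head _ _)).
    by move=> x; rewrite inE => /eqP->.
  by rewrite big_seq1 scaler0.
by rewrite oner_eq0.
Qed.

Lemma lin_indep_spanpI A B : lin_indep (A `|` B) -> A `&` B = set0 ->
  spanp A `&` spanp B `<=` [set 0].
Proof.
move=> iAB AB0 x [/spanp_uniq[s [a [us sA xE]]] /spanp_uniq[r [b [ur rB xE']]]].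
have sr y : y \in r -> y \notin s.
  by move=> /rB By; apply/negP => /sA Ay; have : (A `&` B) y by []; rewrite AB0.
pose c y := if y \in s then a y else - b y.
have c0 : forall y, y \in s ++ r -> c y = 0.
  apply: (iAB _ c).
  - by rewrite cat_uniq us ur andbT; apply/hasPn => y /sr.
  - by move=> y; rewrite mem_cat => /orP[/sA|/rB]; [left|right].
  rewrite big_cat /= (eq_big_seq (fun y => a y *: y)) -?xE; last first.
    by move=> y ys; rewrite /c ys.
  rewrite (eq_big_seq (fun y => - (b y *: y))) ?sumrN -?xE' ?subrr // => y yr.
  by rewrite /c (negbTE (sr y yr)) scaleNr.
rewrite xE /= big_seq big1 // => y ys.
by have := c0 y; rewrite mem_cat ys /c ys => ->; rewrite ?scale0r.
Qed.

Lemma lin_indep_notin_spanp A q : lin_indep A -> A q -> ~ spanp (A `\ q) q.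
Proof.
move=> iA Aq qAq; apply: (lin_indep_neq0 iA).
have q0 : q = 0.
  apply: (@lin_indep_spanpI [set q] (A `\ q)); last by split => //; exact: sub_spanp.
  - by rewrite setDUK // => _ ->.
  - exact: setDIK.
by rewrite -q0.
Qed.

Lemma lin_indepU1 A y : lin_indep A -> ~ spanp A y -> lin_indep (A `|` [set y]).
Proof.
move=> iA nAy s c us sAy s0.
have [ys|nys] := boolP (y \in s); last first.
  apply: iA => // x xs; case: (sAy x xs) => // xy.
  by move: nys; rewrite -xy xs.
have remA x : x \in rem y s -> A x.
  rewrite mem_rem_uniq // inE => /andP[xy xs].
  by case: (sAy x xs) => // /eqP; rewrite (negbTE xy).
move: s0; rewrite (big_rem y ys) => s0.
have cy : c y = 0.
  apply: contra_notP nAy => /eqP cy0.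
  have -> : y = - (c y)^-1 *: \sum_(x <- rem y s) c x *: x.
    apply: (scalerI cy0); rewrite scalerA mulrN divff // scaleN1r.
    by apply/eqP; rewrite -addr_eq0 s0.
  by apply/spanpZ/spanp_sum => x xr; apply/spanpZ/sub_spanp/remA.
move: s0; rewrite cy scale0r /= add0r => s0 x xs.
have [-> //|xy] := eqVneq x y.
by apply: (iA _ _ (rem_uniq _ us) remA s0); rewrite mem_rem_uniq // inE xy.
Qed.

Lemma extend_basis J S : lin_indep J -> exists M,
  [/\ J `<=` M, M `<=` J `|` S, lin_indep M & S `<=` spanp M].
Proof.
move=> iJ.
have [Fm FP tot|X [[XS iX] Xmax]] :=
    @Zorn_bigcup V [set X | X `<=` S /\ lin_indep (J `|` X)].
  split; first by move=> x [X /FP[XS _] /XS].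
  have [->|/set0P Fm0] := eqVneq Fm set0; first by rewrite bigcup_set0 setU0.
  move=> s c us sJF; have [X FX Xs] := chain_bigcup_seq tot Fm0 sJF.
  by case: (FP X FX) => _ iX; apply: iX Xs.
exists (J `|` X); split => //; first by move=> x [Jx|/XS Sx]; [left|right].
move=> y Sy; apply: contrapT => nMy.
have XyS : X `|` [set y] `<=` S by move=> x [/XS|->].
have iXy : lin_indep (J `|` (X `|` [set y])) by rewrite setUA; apply: lin_indepU1.
apply: (Xmax _ _ (conj XyS iXy)).
split; first by move=> x Xx; left.
by move=> /(_ y (or_intror erefl)) Xy; apply: nMy; apply: sub_spanp; right.
Qed.

Lemma is_basisP W B : is_basis W B <-> [/\ B `<=` W, lin_indep B & spanp B = W].
Proof. by rewrite /is_basis spanE; split=> [[? []]|[]]. Qed.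

Lemma extend_basis_spanp C S : lin_indep C -> C `<=` spanp S ->
  exists2 M, C `<=` M & is_basis (spanp S) M.
Proof.
move=> iC CS; have [M [CM MCS iM SM]] := extend_basis S iC.
have MS : M `<=` spanp S by move=> x /MCS[/CS|/sub_spanp].
exists M => //; apply/is_basisP; split => //.
by apply/seteqP; split; exact: spanp_closed.
Qed.

Lemma exists_complement (W K : set V) : subspace W -> subspace K ->
  exists W', [/\ subspace W', W' `<=` K, W `&` W' `<=` [set 0] &
    forall k, K k -> exists x y, [/\ W x, W' y & k = x + y]].
Proof.
move=> Wsub Ksub.
have [A [_ AW iA WA]] := extend_basis W lin_indep0.
have {}AW : A `<=` W by move=> x /AW[[]|].
have [M [AM MAK iM KM]] := extend_basis K iA.
have MAK' : M `\` A `<=` K by move=> x [/MAK[Ax /(_ Ax)|]].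
exists (spanp (M `\` A)); split.
- exact: spanp_subspace.
- exact: spanp_sub_subspace.
- move=> x [/WA Ax MAx].
  by apply: (@lin_indep_spanpI A (M `\` A)) => //; [rewrite setDUK|exact: setDIK].
move=> k Kk; have /spanpU[a [b [Aa MAb ->]]] : spanp (A `|` M `\` A) k.
  by rewrite setDUK //; exact: KM.
by exists a, b; split => //; exact: spanp_sub_subspace Aa.
Qed.

End Span.

Section Dimension.
Variables (F : fieldType) (V : lmodType F).
Implicit Types (M P Z : set V).

Lemma lin_indep_supports M P : lin_indep M -> spanp M = spanp P ->
  exists supp : V -> seq V, M `<=` \bigcup_(p in P) [set` supp p].
Proof.
move=> iM MP.
have /choice[rep repP] : forall p, exists t : seq (F * V), P p ->
    (forall x, x \in t -> M x.2) /\ p = \sum_(x <- t) x.1 *: x.2.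
  move=> p; have [Pp|nPp] := pselect (P p); last by exists [::].
  have [t tM] : spanp M p by rewrite MP; exact: sub_spanp.
  by exists t.
(* An element of M missing from every support would be spanned by the others. *)
exists (fun p => map snd (rep p)) => q Mq; apply: contrapT => nsupp_q.
apply: (lin_indep_notin_spanp iM Mq).
have P_Mq : P `<=` spanp (M `\ q).
  move=> p Pp; have [repM pE] := repP p Pp; exists (rep p); split => // x xp.
  split; first exact: repM.
  by move=> /= xq; apply: nsupp_q; exists p => //=; rewrite -xq; exact: map_f.
apply: (spanp_closed P_Mq); rewrite -MP; exact: sub_spanp.
Qed.

Lemma lin_indep_card_le_spanp M P : lin_indep M -> spanp M = spanp P ->
  infinite_set P -> M #<= P.
Proof.
move=> iM MP Pinf; have [supp Msupp] := lin_indep_supports iM MP.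
exact: card_le_trans (subset_card_le Msupp) (card_bigcup_seq_le _ Pinf).
Qed.

Lemma lin_indep_finite_spanp M P : lin_indep M -> spanp M = spanp P ->
  finite_set P -> finite_set M.
Proof.
move=> iM MP Pfin; have [supp Msupp] := lin_indep_supports iM MP.
by apply: sub_finite_set Msupp _; apply: bigcup_finite => // p _; exact: finite_seq.
Qed.

Lemma lin_indep_card_le Z P : lin_indep Z -> Z `<=` spanp P ->
  infinite_set Z -> Z #<= P.
Proof.
move=> iZ ZP Zinf; have [M [ZM MZP iM PM]] := extend_basis P iZ.
have MP : spanp M = spanp P.
  apply/seteqP; split; apply: spanp_closed => // x /MZP[/ZP|/sub_spanp] //.
have Pinf : infinite_set P.
  by move=> /(lin_indep_finite_spanp iM MP) Mfin; apply/Zinf/(sub_finite_set ZM).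
exact: card_le_trans (subset_card_le ZM) (lin_indep_card_le_spanp iM MP Pinf).
Qed.

Lemma is_basis_infinite W M P : is_basis W M -> is_basis W P ->
  infinite_set P -> infinite_set M.
Proof.
move=> /is_basisP[_ _ sM] /is_basisP[_ iP sP] Pinf.
have PM : P #<= M by apply: lin_indep_card_le iP _ Pinf; rewrite sM -sP; exact: sub_spanp.
by move=> /(card_le_finite PM).
Qed.

End Dimension.

Section Lift.
Variables (F : fieldType) (V W : lmodType F) (g : {linear V -> W}).
Variables (B : set W) (c : W -> V).
Hypothesis c_lift : forall b, B b -> g (c b) = b.

Lemma lift_card_eq : c @` B #= B.
Proof.
apply: inj_card_eq => a b /set_mem Ba /set_mem Bb e.
by rewrite -(c_lift Ba) -(c_lift Bb) e.
Qed.

Lemma lin_indep_lift : lin_indep B -> lin_indep (c @` B).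
Proof.
move=> iB s a us sC s0.
have cg x : x \in s -> c (g x) = x by move=> /sC[b Bb <-]; rewrite c_lift.
have ug : uniq (map g s).
  by rewrite map_inj_in_uniq // => x y xs ys e; rewrite -(cg x xs) -(cg y ys) e.
have gs0 : \sum_(y <- map g s) a (c y) *: y = 0.
  rewrite big_map (eq_big_seq (fun x => a x *: g x)) => [|x xs]; last by rewrite cg.
  by under eq_bigr do rewrite -linearZ; rewrite -linear_sum s0 linear0.
move=> x xs; rewrite -(cg x xs); apply: (iB _ _ ug _ gs0); last exact: map_f.
by move=> y /mapP[z zs ->]; case: (sC z zs) => b Bb <-; rewrite c_lift.
Qed.

Lemma lift_spanp_add_ker : range g `<=` spanp B ->
  forall v, exists w k, [/\ spanp (c @` B) w, g k = 0 & v = w + k].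
Proof.
move=> gB v; have [t [tB gvE]] := gB _ (imageT g v).
pose w := \sum_(p <- t) p.1 *: c p.2.
exists w, (v - w); split; last by rewrite addrC subrK.
  exists [seq (p.1, c p.2) | p <- t]; rewrite big_map; split => //.
  by move=> _ /mapP[p pt ->]; exists p.2 => //; exact: tB.
rewrite linearB linear_sum gvE; apply/eqP; rewrite subr_eq0; apply/eqP/eq_big_seq => p pt.
by rewrite linearZ c_lift //; exact: tB.
Qed.

End Lift.

Section DominantSplitting.
Variables (F : fieldType) (V : lmodType F) (u : {linear V -> V}) (lambda : F).

Local Notation f := (u \- lambda \*: idfun).
Local Notation E := [set x : V | u x = lambda *: x].

Lemma shift_eq0P x : f x = 0 <-> E x.
Proof. by rewrite /= (rwP eqP) subr_eq0 (rwP eqP). Qed.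

Lemma eigenspace_subspace : subspace E.
Proof.
split; first by rewrite /= linear0 scaler0.
split=> [x y /= ux uy|a x /= ux]; first by rewrite linearD ux uy scalerDr.
by rewrite linearZ /= ux !scalerA mulrC.
Qed.

Variables (B : set V) (c : V -> V).
Hypotheses (B_indep : lin_indep B) (B_span : spanp B = range f).
Hypotheses (B_inf : infinite_set B) (c_lift : forall b, B b -> f (c b) = b).

Local Notation C := (c @` B).

Lemma lift_card_le : C #<= B.
Proof. by have /card_eqPle[] := lift_card_eq c_lift. Qed.

Lemma lift_infinite : infinite_set C.
Proof.
by have /card_eqPle[_ BC] := lift_card_eq c_lift; move=> /(card_le_finite BC).
Qed.

Lemma lift_add_eigen v : exists w k, [/\ spanp C w, E k & v = w + k].
Proof.
have [|w [k [Cw /shift_eq0P Ek ->]]] := lift_spanp_add_ker c_lift _ v.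
  by rewrite B_span.
by exists w, k.
Qed.

Lemma card_le_eigen_spanning (B2 M : set V) : lin_indep B2 ->
  spanp B2 = [set: V] -> ~ (B2 #<= B) -> E `<=` spanp M -> B #<= M.
Proof.
move=> iB2 B2T nB2B EM; have [//|MB] := card_le_total B M.
have CM_inf : infinite_set (C `|` M) by apply: sub_infinite_set lift_infinite.
have B2CM : spanp B2 = spanp (C `|` M).
  rewrite B2T; apply/seteqP; split => // v _.
  have [w [k [Cw /EM Mk ->]]] := lift_add_eigen v.
  by apply: spanpD; [exact: spanpS Cw|exact: spanpS Mk].
case: nB2B; apply: card_le_trans (lin_indep_card_le_spanp iB2 B2CM CM_inf) _.
exact: card_setU_le lift_card_le MB B_inf.
Qed.

Variable Z : set V.
Hypotheses (Z_indep : lin_indep Z) (Z_eigen : Z `<=` E) (Z_card : Z #= B).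

Local Notation S := (B `|` C `|` Z).
Local Notation V1 := (spanp S).

Lemma generators_card_le : S #<= B.
Proof.
have /card_eqPle[ZB _] := Z_card.
by apply: card_setU_le ZB B_inf; exact: card_setU_le lift_card_le B_inf.
Qed.

Lemma Z_infinite : infinite_set Z.
Proof. by have /card_eqPle[_ BZ] := Z_card; move=> /(card_le_finite BZ). Qed.

Lemma V1_stable : u @` V1 `<=` V1.
Proof.
move=> _ [x V1x <-]; have -> : u x = f x + lambda *: x by rewrite /= subrK.
apply: spanpD; last exact: spanpZ.
have BS : B `<=` S by move=> b Bb; left; left.
by apply: (spanpS BS); rewrite B_span; exact: imageT.
Qed.

Lemma V1_infinite_dim : infinite_dim V1.
Proof.
have CS : C `<=` V1 by move=> x Cx; apply: sub_spanp; left; right.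
have [M CM bM] := extend_basis_spanp (lin_indep_lift c_lift B_indep) CS.
by exists M; split => // /(sub_finite_set CM); exact: lift_infinite.
Qed.

Lemma V1_add_eigen v : exists x k, [/\ V1 x, E k & v = x + k].
Proof.
have [w [k [Cw Ek ->]]] := lift_add_eigen v; exists w, k; split => //.
by apply: spanpS Cw => x Cx; left; right.
Qed.

Lemma V1_not_dominant mu : ~ dominant_eigenvalue_on u V1 mu.
Proof.
move=> [P [Q [/is_basisP[_ iP sP] [/is_basisP[_ iQ sQ] [_]]]]]; apply.
have S_inf : infinite_set S by apply: sub_infinite_set B_inf => x Bx; left; left.
have QS := lin_indep_card_le_spanp iQ sQ S_inf.
suff BP : B #<= P by exact: card_le_trans QS (card_le_trans generators_card_le BP).
case: (eqVneq mu lambda) sP => [->|mu_neq] sP.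
  apply: lin_indep_card_le B_indep _ B_inf; rewrite sP => b Bb.
  by exists (c b); [apply: sub_spanp; left; right; exists b|exact: c_lift].
have /card_eqPle[_ BZ] := Z_card; apply: card_le_trans BZ _.
apply: lin_indep_card_le Z_indep _ Z_infinite; rewrite sP => z Zz.
exists ((lambda - mu)^-1 *: z); first by apply/spanpZ/sub_spanp; right.
rewrite linearZ /= (Z_eigen Zz) [mu *: _]scalerA mulrC -scalerA -scalerBr -scalerBl.
by rewrite scalerA mulVf ?scale1r // subr_eq0 eq_sym.
Qed.

End DominantSplitting.

Unset Implicit Arguments.

Theorem lemma2 (F : fieldType) (V : lmodType F) (u : {linear V -> V})
    (lambda : F) :
  infinite_dim [set: V] ->
  dominant_eigenvalue_on u [set: V] lambda ->
  infinite_dim (shifted_image u lambda [set: V]) ->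
  exists V1 V2 : set V,
    [/\ subspace V1, subspace V2,
        V1 `&` V2 = [set 0] &
        (forall v, exists x1 x2, V1 x1 /\ V2 x2 /\ v = x1 + x2)] /\
    (u @` V1 `<=` V1 /\ u @` V2 `<=` V2) /\
    [/\ infinite_dim V1,
        (forall mu : F, ~ dominant_eigenvalue_on u V1 mu) &
        (forall x, V2 x -> u x = lambda *: x)].
Proof.
move=> _ [B [B2 [bB [/is_basisP[_ iB2 sB2] [_ nB2B]]]]] [B' [bB' B'_inf]].
have B_inf := is_basis_infinite bB bB' B'_inf.
have /is_basisP[BW iB sB] := bB.
have /choice[c c_lift] : forall b, exists x, B b -> u x - lambda *: x = b.
  by move=> b; have [/BW[x _ <-]|nBb] := pselect (B b); [exists x|exists 0 => /nBb].
have [M [_ ME iM EM]] := extend_basis [set x | u x = lambda *: x] (@lin_indep0 F V).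
have [Z ZM ZB] := card_le_subset_eq
  (card_le_eigen_spanning sB B_inf c_lift iB2 sB2 nB2B EM).
have Z_eigen : Z `<=` [set x | u x = lambda *: x] by move=> x /ZM/ME[[]|].
have [V2 [V2sub V2E V12 Edec]] :=
  exists_complement (spanp_subspace (B `|` c @` B `|` Z)) (eigenspace_subspace u lambda).
exists (spanp (B `|` c @` B `|` Z)), V2; split; [split|split; [split|split]].
- exact: spanp_subspace.
- exact: V2sub.
- by apply/seteqP; split => // _ ->; split; [exact: spanp0|case: V2sub].
- move=> v; have [x [k [V1x /Edec[y [z [V1y V2z ->]]] ->]]] := V1_add_eigen sB c_lift Z v.
  by exists (x + y), z; rewrite addrA; split => //; exact: spanpD.
- exact: (V1_stable sB).
- by move=> _ [x V2x <-]; rewrite V2E //; case: V2sub => _ [_]; apply.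
- exact: (V1_infinite_dim iB B_inf c_lift).
- exact: (V1_not_dominant iB B_inf c_lift (lin_indepS ZM iM) Z_eigen ZB).
- exact: V2E.
Qed.
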